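(* Let $0<\eta\le\gamma$ and let $c$ satisfy \[ 0\le c\le\frac{\sqrt{2|2\eta-\gamma|+\gamma^2+1}-|2\eta-\gamma|-1}{4\eta^2}. \] Let $\epsilon\in[-1,1]$ and let $x$ be a random variable with values in $[-1,1]$ such that $\mathbb E[e^{-\gamma x}]\le e^{\gamma\epsilon}$. Then \[ \mathbb E\big[e^{c\eta^2x^2-\eta x}\big]\;\le\;e^{c\eta^2\epsilon^2+\eta\epsilon}. \] *)

From Stdlib Require Import Reals.
Open Scope R_scope.

(* [is_expectation_of x E] : E is the expectation operator of a probability
   space (sample space Omega), restricted to the random variables f(x) with
   f : R -> R continuous (these are bounded and measurable since x is a
   random variable with values in [-1,1]). *)
Definition is_expectation_of {Omega : Type} (x : Omega -> R)
  (E : (Omega -> R) -> R) : Prop :=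
  (forall f g : R -> R, continuity f -> continuity g ->
     E (fun w => f (x w) + g (x w)) = E (fun w => f (x w)) + E (fun w => g (x w))) /\
  (forall (a : R) (f : R -> R), continuity f ->
     E (fun w => a * f (x w)) = a * E (fun w => f (x w))) /\
  (forall f g : R -> R, continuity f -> continuity g ->
     (forall w, f (x w) <= g (x w)) ->
     E (fun w => f (x w)) <= E (fun w => g (x w))) /\
  E (fun _ => 1) = 1.

(* Put A := c eta^2, f u := exp (A u^2 - eta u) and g u := exp (- gamma u).
   The ratio f' / g' = - (2 A u - eta) exp (A u^2 - (eta - gamma) u) / gamma has
   derivative of the sign of - Q u, where Q u := 2 A + (2 A u - eta) (2 A u - eta + gamma)
   is a convex quadratic; the bound on c is exactly what makes Q <= 0 at u = 1 and
   u = -1, hence on [-1, 1].  So f is a concave function of g on [-1, 1] and lies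
   below its tangent at u0 := - eps: f u <= f u0 + D (g u - g u0) with
   D = f' u0 / g' u0 >= 0.  Taking expectations, E[g x] <= g u0 gives E[f x] <= f u0. *)

From Stdlib Require Import Reals Lra Psatz.
From Coquelicot Require Import Coquelicot.
Open Scope R_scope.

Lemma continuity_of_ex_derive (f : R -> R) :
  (forall u, ex_derive f u) -> continuity f.
Proof.
  intros Hf u; apply continuity_pt_filterlim.
  apply (@ex_derive_continuous R_AbsRing R_NormedModule), Hf.
Qed.

Lemma MVT_between (f df : R -> R) (a b : R) :
  (forall u, is_derive f u (df u)) ->
  exists c, Rmin a b <= c <= Rmax a b /\ f b - f a = df c * (b - a).
Proof.
  intros Hf; apply MVT_gen; intros u _; [apply Hf|].
  apply continuity_of_ex_derive; intro v; exists (df v); apply Hf.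
Qed.

Lemma nondecreasing_of_derive_nonneg (r dr : R -> R) (a b : R) :
  (forall u, is_derive r u (dr u)) ->
  (forall u, a <= u <= b -> 0 <= dr u) ->
  forall u v, a <= u -> u <= v -> v <= b -> r u <= r v.
Proof.
  intros Hr Hdr u v Hau Huv Hvb.
  destruct (MVT_between r dr u v Hr) as [z [Hz Ez]].
  rewrite Rmin_left in Hz by lra; rewrite Rmax_right in Hz by lra.
  assert (0 <= dr z * (v - u)) by (apply Rmult_le_pos; [apply Hdr|]; lra).
  lra.
Qed.

Lemma is_derive_tangent_gap (f g df dg : R -> R) (D u0 v : R) :
  (forall v, is_derive f v (df v)) -> (forall v, is_derive g v (dg v)) ->
  is_derive (fun v => f u0 + D * (g v - g u0) - f v) v (D * dg v - df v).
Proof.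
  intros Hf Hg.
  pose proof (is_derive_minus _ _ v _ _
    (is_derive_plus _ _ v _ _ (is_derive_const (f u0) v)
       (is_derive_scal _ v D _
          (is_derive_minus _ _ v _ _ (Hg v) (is_derive_const (g u0) v))))
    (Hf v)) as H.
  unfold minus, plus, opp, zero in H; simpl in H.
  replace (D * dg v - df v) with (0 + D * (dg v + - 0) + - df v) by ring.
  exact H.
Qed.

(* The tangent is taken in the coordinate g: psi := f u0 + D (g - g u0) - f
   has derivative (- g') (r - r u0) with r := f' / g', whose sign is that of
   u - u0 when r is nondecreasing, so psi is minimal (= 0) at u0. *)
Lemma tangent_bound_of_derive_ratio_nondecreasing
    (f g df dg : R -> R) (a b u0 u : R) :
  (forall v, is_derive f v (df v)) -> (forall v, is_derive g v (dg v)) ->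
  (forall v, a <= v <= b -> dg v < 0) ->
  (forall v w, a <= v -> v <= w -> w <= b -> df v / dg v <= df w / dg w) ->
  a <= u0 <= b -> a <= u <= b ->
  f u <= f u0 + df u0 / dg u0 * (g u - g u0).
Proof.
  intros Hf Hg Hdg Hr Hu0 Hu.
  set (D := df u0 / dg u0).
  destruct (MVT_between (fun v => f u0 + D * (g v - g u0) - f v)
              (fun v => D * dg v - df v) u0 u
              (fun v => is_derive_tangent_gap f g df dg D u0 v Hf Hg))
    as [z [Hz Ez]].
  assert (Hza : a <= z <= b).
  { split; [apply Rle_trans with (Rmin u0 u) | apply Rle_trans with (Rmax u0 u)];
      try apply Rmin_glb; try apply Rmax_lub; lra. }
  assert (Hdgz := Hdg z Hza).
  assert (Hdfz : df z = df z / dg z * dg z) by (field; lra).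
  assert (Hsign : (df z / dg z - D) * (u - u0) >= 0).
  { destruct (Rle_dec u0 u).
    - rewrite Rmin_left in Hz by lra.
      assert (D <= df z / dg z) by (apply Hr; lra). nra.
    - rewrite Rmax_left in Hz by lra.
      assert (df z / dg z <= D) by (apply Hr; lra). nra. }
  replace (u0 - u0) with 0 in Ez by ring.
  rewrite Hdfz in Ez. nra.
Qed.

Lemma expectation_le_affine_bound {Omega : Type} (x : Omega -> R)
    (E : (Omega -> R) -> R) (f g : R -> R) (K D : R) :
  is_expectation_of x E -> continuity f -> continuity g ->
  (forall w, f (x w) <= K + D * g (x w)) ->
  E (fun w => f (x w)) <= K + D * E (fun w => g (x w)).
Proof.
  intros [Hadd [Hhom [Hmono H1]]] Hf Hg Hfg.
  assert (H1c : continuity (fun _ : R => 1)) by (apply continuity_const; now intros ? ?).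
  assert (HKc : continuity (fun _ : R => K * 1)) by now apply continuity_scal.
  assert (HDg : continuity (fun u => D * g u)) by now apply continuity_scal.
  pose proof (Hmono f (fun u => K * 1 + D * g u) Hf
                (continuity_plus _ _ HKc HDg)) as M; simpl in M.
  rewrite (Hadd (fun _ => K * 1) (fun u => D * g u) HKc HDg),
    (Hhom K (fun _ => 1) H1c), (Hhom D g Hg), H1 in M.
  rewrite Rmult_1_r in M; apply M; intro w; apply Hfg.
Qed.

Lemma convex_quadratic_nonpos_on_unit_interval (a b c u : R) :
  0 <= a -> a - b + c <= 0 -> a + b + c <= 0 -> -1 <= u <= 1 ->
  a * u ^ 2 + b * u + c <= 0.
Proof.
  intros Ha Hm Hp Hu.
  assert (u ^ 2 <= 1) by nra.
  assert (a * u ^ 2 <= a * 1) by (apply Rmult_le_compat_l; lra).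
  assert (0 <= (1 + u) * - (a + b + c)) by nra.
  assert (0 <= (1 - u) * - (a - b + c)) by nra.
  nra.
Qed.

Section ExpQuadratic.

Variables A eta gamma : R.
Hypothesis gamma_gt0 : 0 < gamma.

Let f u := exp (A * u ^ 2 - eta * u).
Let df u := (2 * A * u - eta) * exp (A * u ^ 2 - eta * u).
Let g u := exp (- gamma * u).
Let dg u := - gamma * exp (- gamma * u).
Let r u := - (2 * A * u - eta) * exp (A * u ^ 2 - eta * u + gamma * u) / gamma.
Let Q u := 2 * A + (2 * A * u - eta) * (2 * A * u - eta + gamma).

Lemma exp_quadratic_derive_ratio u : df u / dg u = r u.
Proof.
  unfold df, dg, r; rewrite exp_plus.
  replace (gamma * u) with (- (- gamma * u)) by ring; rewrite exp_Ropp.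
  assert (0 < exp (- gamma * u)) by apply exp_pos.
  field; lra.
Qed.

Lemma is_derive_exp_quadratic_ratio u :
  is_derive r u (- Q u * exp (A * u ^ 2 - eta * u + gamma * u) / gamma).
Proof.
  unfold r, Q; auto_derive; [easy|].
  replace (A * (u * (u * 1)) + - (eta * u) + gamma * u)
    with (A * u ^ 2 - eta * u + gamma * u) by ring.
  field; lra.
Qed.

Lemma exp_quadratic_tangent_bound u0 u :
  Q 1 <= 0 -> Q (-1) <= 0 -> -1 <= u0 <= 1 -> -1 <= u <= 1 ->
  f u <= f u0 + df u0 / dg u0 * (g u - g u0).
Proof.
  intros Q1 Qm1 Hu0 Hu.
  apply tangent_bound_of_derive_ratio_nondecreasing with (-1) 1; auto.
  - intro v; unfold f, df; auto_derive; [easy|].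
    replace (A * (v * (v * 1)) + - (eta * v)) with (A * v ^ 2 - eta * v) by ring.
    ring.
  - intro v; unfold g, dg; auto_derive; [easy|ring].
  - intros v _; unfold dg; pose proof (exp_pos (- gamma * v)); nra.
  - intros v w Hv Hvw Hw; rewrite !exp_quadratic_derive_ratio.
    apply nondecreasing_of_derive_nonneg with
      (fun u => - Q u * exp (A * u ^ 2 - eta * u + gamma * u) / gamma) (-1) 1;
      auto using is_derive_exp_quadratic_ratio.
    intros z Hz.
    assert (Qz : Q z <= 0).
    { replace (Q z) with
        ((2 * A) ^ 2 * z ^ 2 + 2 * A * (gamma - 2 * eta) * z + (2 * A + eta * (eta - gamma)))
        by (unfold Q; ring).
      apply convex_quadratic_nonpos_on_unit_interval; auto;
        unfold Q in Q1, Qm1; nra. }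
    pose proof (exp_pos (A * z ^ 2 - eta * z + gamma * z)).
    unfold Rdiv; apply Rmult_le_pos; [nra|].
    left; apply Rinv_0_lt_compat; lra.
Qed.

Lemma exp_quadratic_derive_ratio_nonneg u0 :
  2 * A * u0 <= eta -> 0 <= df u0 / dg u0.
Proof.
  intros Hu0; rewrite exp_quadratic_derive_ratio; unfold r.
  pose proof (exp_pos (A * u0 ^ 2 - eta * u0 + gamma * u0)).
  unfold Rdiv; apply Rmult_le_pos; [nra|].
  left; apply Rinv_0_lt_compat; lra.
Qed.

Lemma expectation_exp_quadratic_tangent_bound {Omega : Type} (x : Omega -> R)
    (E : (Omega -> R) -> R) u0 :
  is_expectation_of x E -> (forall w, -1 <= x w <= 1) ->
  Q 1 <= 0 -> Q (-1) <= 0 -> -1 <= u0 <= 1 ->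
  E (fun w => f (x w)) <= f u0 + df u0 / dg u0 * (E (fun w => g (x w)) - g u0).
Proof.
  intros HE Hx Q1 Qm1 Hu0.
  assert (Hfc : continuity f)
    by (apply continuity_of_ex_derive; intro; unfold f; auto_derive; easy).
  assert (Hgc : continuity g)
    by (apply continuity_of_ex_derive; intro; unfold g; auto_derive; easy).
  set (D := df u0 / dg u0).
  replace (f u0 + D * (E (fun w => g (x w)) - g u0))
    with ((f u0 - D * g u0) + D * E (fun w => g (x w))) by ring.
  apply expectation_le_affine_bound; auto.
  intro w; pose proof (exp_quadratic_tangent_bound u0 (x w) Q1 Qm1 Hu0 (Hx w)) as Ht.
  fold D in Ht; lra.
Qed.

(* With w := 2 A and k := |2 eta - gamma|, the bound on A says
   (2 w + k + 1)^2 <= 2 k + gamma^2 + 1, i.e. w^2 + (k + 1) w + eta (eta - gamma) <= 0,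
   which dominates both Q 1 and Q (-1). *)
Lemma exp_quadratic_admissible_endpoints :
  0 < eta -> eta <= gamma -> 0 <= A ->
  4 * A <= sqrt (2 * Rabs (2 * eta - gamma) + gamma ^ 2 + 1)
             - Rabs (2 * eta - gamma) - 1 ->
  2 * A <= eta /\ Q 1 <= 0 /\ Q (-1) <= 0.
Proof.
  intros Heta Hg HA HAb.
  set (k := Rabs (2 * eta - gamma)) in *.
  set (S := sqrt (2 * k + gamma ^ 2 + 1)) in *.
  assert (Hk : k >= 2 * eta - gamma /\ k >= gamma - 2 * eta
               /\ k * k = (2 * eta - gamma) * (2 * eta - gamma)).
  { unfold k, Rabs; destruct (Rcase_abs (2 * eta - gamma)); nra. }
  assert (HS2 : S * S = 2 * k + gamma ^ 2 + 1) by (apply sqrt_sqrt; nra).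
  assert (HS0 : 0 <= S) by apply sqrt_pos.
  assert (Hsq : (4 * A + k + 1) * (4 * A + k + 1) <= S * S)
    by (apply Rmult_le_compat; lra).
  assert (Hw : (2 * A) * (2 * A) + 2 * A * (k + 1) + eta * (eta - gamma) <= 0) by nra.
  unfold Q; repeat split; nra.
Qed.

End ExpQuadratic.

Theorem mainTheorem12 (eta gamma c eps : R) (Omega : Type)
  (x : Omega -> R) (E : (Omega -> R) -> R) :
  0 < eta -> eta <= gamma ->
  0 <= c ->
  c <= (sqrt (2 * Rabs (2 * eta - gamma) + gamma ^ 2 + 1)
          - Rabs (2 * eta - gamma) - 1) / (4 * eta ^ 2) ->
  -1 <= eps <= 1 ->
  (forall w, -1 <= x w <= 1) ->
  is_expectation_of x E ->
  E (fun w => exp (- gamma * x w)) <= exp (gamma * eps) ->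
  E (fun w => exp (c * eta ^ 2 * (x w) ^ 2 - eta * x w))
    <= exp (c * eta ^ 2 * eps ^ 2 + eta * eps).
Proof.
  intros Heta Hg Hc Hcb Heps Hx HE HEg.
  set (A := c * eta ^ 2).
  assert (HAb : 4 * A <= sqrt (2 * Rabs (2 * eta - gamma) + gamma ^ 2 + 1)
                          - Rabs (2 * eta - gamma) - 1).
  { assert (0 < 4 * eta ^ 2) by nra.
    apply (Rmult_le_compat_r (4 * eta ^ 2)) in Hcb; [|lra].
    unfold Rdiv in Hcb; rewrite Rmult_assoc, Rinv_l in Hcb; unfold A; lra. }
  assert (HA : 0 <= A) by (unfold A; nra).
  destruct (exp_quadratic_admissible_endpoints A eta gamma Heta Hg HA HAb)
    as [HAeta [Q1 Qm1]].
  pose proof (expectation_exp_quadratic_tangent_bound A eta gamma ltac:(lra)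
    x E (- eps) HE Hx Q1 Qm1 ltac:(lra)) as HEf.
  pose proof (exp_quadratic_derive_ratio_nonneg A eta gamma ltac:(lra) (- eps)
    ltac:(nra)) as HD.
  cbv beta in HEf, HD.
  replace (A * (- eps) ^ 2 - eta * - eps) with (A * eps ^ 2 + eta * eps)
    in HEf, HD by ring.
  replace (- gamma * - eps) with (gamma * eps) in HEf, HD by ring.
  pose proof (Rmult_le_compat_l _ _ _ HD HEg).
  lra.
Qed.
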